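(* Let $r$ and $d$ be positive integers, let $\operatorname{Tv}(d,r)=(d+1)(r-1)+1$, and let $S\subset\mathbb{R}^d$ be a finite set of at least $3\operatorname{Tv}(d,r)-1$ points. Then the Tverberg $r$-partition graph $G_T[S,r]$ is connected.
   Context: A partition of a finite set $S$ into $r$ parts is a collection of $r$ nonempty pairwise disjoint subsets $P_1,\dots,P_r$ (unordered) whose union is $S$. For a finite $S\subset\mathbb{R}^d$, a Tverberg partition of $S$ into $r$ parts is a partition $P_1,\dots,P_r$ of $S$ into $r$ parts with $\bigcap_{j=1}^r\operatorname{conv}(P_j)\neq\emptyset$. For two partitions $P,P'$ of $S$, the partition distance $D(P,P')$ is the minimum number of elements of $S$ that must be removed so that $P$ and $P'$ restricted to the remaining elements coincide (equivalently, the minimum number of elements that must be moved from one part to another to transform $P$ into $P'$). The Tverberg $r$-partition graph $G_T[S,r]$ has as vertices all Tverberg partitions of $S$ into $r$ parts, with an edge between $P$ and $P'$ if and only if $D(P,P')=1$. *)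

From HB Require Import structures.
From mathcomp Require Import all_boot all_order all_algebra.
From mathcomp Require Import reals.
Set Implicit Arguments. Unset Strict Implicit. Unset Printing Implicit Defensive.
Import Order.TTheory GRing.Theory Num.Theory.
Local Open Scope ring_scope.

Definition Tv (d r : nat) : nat := ((d.+1) * (r - 1) + 1)%N.

Section Tverberg.
Variables (R : realType) (d : nat) (T : finType) (p : T -> 'rV[R]_d).

Definition in_conv (A : {set T}) (x : 'rV[R]_d) : Prop :=
  exists w : T -> R, (forall i, 0 <= w i) /\ \sum_(i in A) w i = 1 /\
                     x = \sum_(i in A) w i *: p i.

Definition is_r_partition (r : nat) (P : {set {set T}}) : Prop :=
  partition P [set: T] /\ #|P| = r.

Definition is_tverberg (r : nat) (P : {set {set T}}) : Prop :=
  is_r_partition r P /\ exists x, forall B, B \in P -> in_conv B x.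

End Tverberg.

Definition restrict (T : finType) (P : {set {set T}}) (X : {set T}) : {set {set T}} :=
  [set B :&: X | B in P] :\ set0.

(* partition distance: least number of elements to remove so that the
   restrictions coincide (removing everything always works) *)
Definition pdist (T : finType) (P Q : {set {set T}}) : nat :=
  \big[minn/#|T|]_(Y : {set T} | restrict P (~: Y) == restrict Q (~: Y)) #|Y|.

Definition tverberg_graph_connected (R : realType) (d : nat) (T : finType)
    (p : T -> 'rV[R]_d) (r : nat) : Prop :=
  forall P Q, is_tverberg p r P -> is_tverberg p r Q ->
  exists (k : nat) (f : nat -> {set {set T}}),
    f 0%N = P /\ f k = Q /\
    (forall i, (i <= k)%N -> is_tverberg p r (f i)) /\
    (forall i, (i < k)%N -> pdist (f i) (f i.+1) = 1%N).

From HB Require Import structures.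
From mathcomp Require Import all_boot all_order all_algebra.
From mathcomp Require Import reals.
From mathcomp Require Import ring zify.
From Stdlib Require Import IndefiniteDescription.
From mathcomp Require boolp classical_sets topology normedtype derive.
Set Implicit Arguments. Unset Strict Implicit. Unset Printing Implicit Defensive.
Import Order.TTheory GRing.Theory Num.Theory.
Local Open Scope ring_scope.

(* A Tverberg partition, seen as a labelling L of the points by 'I_r, has a
   core: a set C of at most Tv(d,r) points such that every labelling agreeing
   with L on C is again Tverberg.  Sarkaria's lifting turns the common point of
   the parts into a vanishing nonnegative combination of vectors of dimension
   (d+1)(r-1), and Caratheodory's theorem for cones shrinks its support.
   If the partitions P and Q have disjoint cores, relabel the points one at a
   time from P to the labelling that is P on its core and Q elsewhere, and from
   there to Q: every intermediate partition is Tverberg and consecutive ones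
   are at distance 1.  Otherwise the two cores cover at most 2 Tv(d,r) - 1
   points, so Tv(d,r) points remain; Tverberg's theorem (Sarkaria's lifting and
   the colourful Caratheodory theorem) gives them a Tverberg partition R whose
   core avoids both, and we walk from P to R to Q. *)

Definition convex_weights (R : numDomainType) (I : finType) (l : I -> R) :=
  (forall i, 0 <= l i) /\ \sum_i l i = 1.

Lemma convex_weights_card_gt0 (R : numDomainType) (I : finType) (l : I -> R) :
  convex_weights l -> (0 < #|I|)%N.
Proof.
move=> [_ l_sum1]; rewrite lt0n; apply/negP => /eqP/card0_eq I0; move: l_sum1.
by rewrite big_pred0 // => /esym/eqP; rewrite oner_eq0.
Qed.

Section Euclidean.
Variable R : realFieldType.

Definition dotr n (u v : 'rV[R]_n) : R := \sum_j u 0 j * v 0 j.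
Definition sqnorm n (u : 'rV[R]_n) : R := dotr u u.

Lemma dotrDl n (u v w : 'rV[R]_n) : dotr (u + v) w = dotr u w + dotr v w.
Proof. by rewrite /dotr -big_split; apply: eq_bigr => j _; rewrite mxE mulrDl. Qed.

Lemma dotrZl n a (u w : 'rV[R]_n) : dotr (a *: u) w = a * dotr u w.
Proof. by rewrite /dotr mulr_sumr; apply: eq_bigr => j _; rewrite mxE mulrA. Qed.

Lemma dotrBl n (u v w : 'rV[R]_n) : dotr (u - v) w = dotr u w - dotr v w.
Proof. by rewrite dotrDl -scaleN1r dotrZl mulN1r. Qed.

Lemma dotr0l n (w : 'rV[R]_n) : dotr 0 w = 0.
Proof. by rewrite /dotr big1 // => j _; rewrite mxE mul0r. Qed.

Lemma dotrC n (u w : 'rV[R]_n) : dotr u w = dotr w u.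
Proof. by apply: eq_bigr => j _; rewrite mulrC. Qed.

Lemma dotr_suml n (I : finType) (l : I -> R) (v : I -> 'rV[R]_n) w :
  dotr (\sum_i l i *: v i) w = \sum_i l i * dotr (v i) w.
Proof.
rewrite /dotr; under eq_bigr => j _ do rewrite summxE mulr_suml.
rewrite exchange_big; apply: eq_bigr => i _; rewrite mulr_sumr.
by apply: eq_bigr => j _; rewrite mxE mulrA.
Qed.

Lemma sqnorm_ge0 n (u : 'rV[R]_n) : 0 <= sqnorm u.
Proof. by apply: sumr_ge0 => j _; rewrite -expr2 sqr_ge0. Qed.

Lemma sqnorm_eq0 n (u : 'rV[R]_n) : (sqnorm u == 0) = (u == 0).
Proof.
apply/idP/eqP => [/eqP u0 | ->]; last by rewrite /sqnorm dotr0l.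
apply/rowP => j; rewrite mxE.
have /eqP := @psumr_eq0P _ _ xpredT (fun j => u 0 j * u 0 j)
  (fun j _ => sqr_ge0 (u 0 j)) u0 j isT.
by rewrite mulf_eq0 orbb => /eqP.
Qed.

Lemma sqnormDZ n (z w : 'rV[R]_n) t :
  sqnorm (z + t *: w) = sqnorm z + t * (2 * dotr w z + t * sqnorm w).
Proof.
rewrite /sqnorm !dotrDl !dotrZl ![dotr _ (z + _)]dotrC !dotrDl !dotrZl [dotr z w]dotrC.
ring.
Qed.

Lemma sqnorm_segment_lt n (z q : 'rV[R]_n) : dotr (q - z) z < 0 ->
  exists t, [/\ 0 < t, t <= 1 & sqnorm ((1 - t) *: z + t *: q) < sqnorm z].
Proof.
move=> a_lt0; set a := dotr (q - z) z in a_lt0; set b := sqnorm (q - z).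
have b_ge0 : 0 <= b := sqnorm_ge0 _.
have sqnormE t : sqnorm ((1 - t) *: z + t *: q) = sqnorm z + t * (2 * a + t * b).
  by rewrite scalerBl scale1r -addrA [- _ + _]addrC -scalerBr sqnormDZ.
pose t := if b <= - a then 1 else - a / b.
have [t_gt0 t_le1 tb_le] : [/\ 0 < t, t <= 1 & t * b <= - a].
  rewrite /t; case: ifP => [|/negbT]; first by rewrite mul1r ltr01 lexx.
  rewrite -ltNge => ab_lt; have b_gt0 : 0 < b by rewrite (lt_trans _ ab_lt) ?oppr_gt0.
  by rewrite divr_gt0 ?oppr_gt0 // ler_pdivrMr // mul1r ltW // divfK ?gt_eqF.
exists t; split => //; rewrite sqnormE gtrDl pmulr_rlt0 //.
apply: le_lt_trans (_ : 2 * a + - a < 0); first by rewrite lerD2l.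
by rewrite mulr2n mulrDl mul1r addrK.
Qed.

Lemma convex_weights_toward (I : finType) (l : I -> R) i t :
  convex_weights l -> 0 < t -> t <= 1 ->
  convex_weights (fun k => (1 - t) * l k + t * (k == i)%:R).
Proof.
move=> [l_ge0 l_sum1] t_gt0 t_le1; split => [k|].
  by rewrite addr_ge0 // mulr_ge0 ?subr_ge0 ?ler0n // ltW.
rewrite /= big_split /= -mulr_sumr l_sum1 mulr1 -mulr_sumr (bigD1 i) //= eqxx.
by rewrite big1 ?addr0 ?mulr1 ?subrK // => k /negbTE ->.
Qed.

Lemma comb_toward n (I : finType) (l : I -> R) (w : I -> 'rV[R]_n) i t :
  \sum_k ((1 - t) * l k + t * (k == i)%:R) *: w k
  = (1 - t) *: \sum_k l k *: w k + t *: w i.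
Proof.
under eq_bigr do rewrite scalerDl -!scalerA.
rewrite big_split /= -!scaler_sumr; congr (_ + t *: _).
by rewrite (bigD1 i) //= eqxx scale1r big1 ?addr0 // => k /negbTE ->; rewrite scale0r.
Qed.

Lemma convex_comb_sqnorm_lt n (I : finType) (l : I -> R) (w : I -> 'rV[R]_n) i :
  let z := \sum_k l k *: w k in
  convex_weights l -> dotr (w i - z) z < 0 ->
  exists2 l', convex_weights l' & sqnorm (\sum_k l' k *: w k) < sqnorm z.
Proof.
move=> z l_cvx /sqnorm_segment_lt[t [t_gt0 t_le1 lt_z]].
by exists (fun k => (1 - t) * l k + t * (k == i)%:R);
  rewrite ?comb_toward //; exact: convex_weights_toward.
Qed.

Lemma exists_dotr_le0 n (I : finType) (b : I -> R) (w : I -> 'rV[R]_n) z :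
  convex_weights b -> \sum_j b j *: w j = 0 -> exists j, dotr (w j) z <= 0.
Proof.
move=> b_cvx bw0; have /card_gt0P[j0 _] := convex_weights_card_gt0 b_cvx.
have [b_ge0 b_sum1] := b_cvx.
have [j _ j_min] := arg_minP (fun j => dotr (w j) z) (isT : xpredT j0).
have <- : \sum_k b k * dotr (w k) z = 0 by rewrite -dotr_suml bw0 dotr0l.
exists j; rewrite -[dotr _ _]mul1r -b_sum1 mulr_suml.
by apply: ler_sum => k _; rewrite ler_wpM2l ?j_min.
Qed.

Section MinimalNorm.
Variables (n : nat) (I : finType) (w : I -> 'rV[R]_n) (l : I -> R).
Hypothesis l_cvx : convex_weights l.
Hypothesis l_min : forall m, convex_weights m ->
  sqnorm (\sum_i l i *: w i) <= sqnorm (\sum_i m i *: w i).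
Let z := \sum_i l i *: w i.

Lemma min_sqnorm_le_dotr i : sqnorm z <= dotr (w i) z.
Proof.
rewrite -subr_ge0 -dotrBl leNgt; apply/negP => /(convex_comb_sqnorm_lt l_cvx)[m m_cvx].
by apply/negP; rewrite -leNgt l_min.
Qed.

Lemma min_sqnorm_eq_dotr i : l i != 0 -> dotr (w i) z = sqnorm z.
Proof.
have dot_ge0 k : 0 <= l k * dotr (w k - z) z.
  by rewrite mulr_ge0 ?(proj1 l_cvx) // dotrBl subr_ge0 min_sqnorm_le_dotr.
have sum0 : \sum_k l k * dotr (w k - z) z = 0.
  under eq_bigr do rewrite dotrBl mulrBr.
  by rewrite sumrB -dotr_suml -mulr_suml (proj2 l_cvx) mul1r subrr.
move=> li0; have /eqP := @psumr_eq0P _ _ xpredT _ (fun k _ => dot_ge0 k) sum0 i isT.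
by rewrite mulf_eq0 (negbTE li0) dotrBl subr_eq0 => /eqP.
Qed.

End MinimalNorm.

End Euclidean.

Module MinimalNormPoint.
Import boolp classical_sets topology normedtype derive numFieldNormedType.Exports.

Lemma exists_min_sqnorm (R : realType) n D (v : 'I_n.+1 -> 'rV[R]_D) :
  exists2 l, convex_weights l & forall m, convex_weights m ->
    sqnorm (\sum_i l i *: v i) <= sqnorm (\sum_i m i *: v i).
Proof.
pose A := [set l : 'rV[R]_n.+1 | convex_weights (l 0)]%classic.
pose f (l : 'rV[R]_n.+1) := sqnorm (\sum_i l 0 i *: v i).
have A0 : (A !=set0)%classic.
  exists (\row_i (i == ord0)%:R); split => [i|]; first by rewrite mxE ler0n.
  by rewrite (bigD1 ord0) //= big1 => [|i /negbTE i0]; rewrite mxE ?i0 ?eqxx ?addr0.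
have coord_cont m i : continuous (fun u : 'rV[R]_m => u 0 i) := @coord_continuous R 1 m 0 i.
have sum_cont (T : topologicalType) (U : normedModType R) m (g : 'I_m -> T -> U) :
    (forall i, continuous (g i)) -> continuous (fun x => \sum_i g i x).
  by move=> g_cont; apply: continuous_big => [|i _]; [exact: add_continuous | exact: g_cont].
have A_closed : closed A.
  have -> : A = (\bigcap_i ((fun l => l 0 i) @^-1` [set x | 0 <= x])
                `&` ((fun l => \sum_i l 0 i) @^-1` [set 1]))%classic.
    by apply/seteqP; split => l /= [l_ge0 l_sum1]; split => // i; [move=> _ | ]; apply: l_ge0.
  apply: closedI; first apply: closed_bigI => i _.
    by apply: preimage_closed; [move=> l _; exact: coord_cont | exact: closed_ge].
  apply: preimage_closed; last exact: closed_eq.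
  by move=> l _; apply: sum_cont => i; exact: coord_cont.
have A_compact : compact A.
  apply: subclosed_compact A_closed (rV_compact (fun=> @segment_compact R 0 1)) _.
  move=> l [l_ge0 l_sum1] i /=; rewrite in_itv /= l_ge0 -l_sum1.
  by rewrite (bigD1 i) //= lerDl sumr_ge0.
have comb_cont : continuous (fun l : 'rV[R]_n.+1 => \sum_i l 0 i *: v i).
  by apply: sum_cont => i l; apply: continuousZr_tmp; exact: coord_cont.
have sqnorm_cont : continuous (fun u : 'rV[R]_D => \sum_j u 0 j * u 0 j).
  by apply: sum_cont => j u; apply: continuousM; exact: coord_cont.
have f_cont : continuous f := fun l => continuous_comp (comb_cont l) (sqnorm_cont _).
have [l lA l_min] := compact_EVT_min A0 A_compact (continuous_subspaceT f_cont).
exists (l 0); first by rewrite inE in lA.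
move=> m [m_ge0 m_sum1].
have mA : \row_i m i \in A.
  by rewrite inE; split => [i|]; rewrite ?mxE //; under eq_bigr => i _ do rewrite mxE.
have := l_min _ mA; rewrite /f.
by under [X in _ <= sqnorm X -> _]eq_bigr => i _ do rewrite mxE.
Qed.

End MinimalNormPoint.

Section ConicCaratheodory.
Variable R : realFieldType.

Lemma exists_lin_dep (I : finType) m (a : I -> 'rV[R]_m) (S : {set I}) :
  (m < #|S|)%N -> exists2 c : I -> R, exists i, c i != 0 &
    {in ~: S, forall i, c i = 0} /\ \sum_i c i *: a i = 0.
Proof.
move=> m_lt_S; have /card_gt0P[i0 i0S] := leq_ltn_trans (leq0n m) m_lt_S.
pose A : 'M[R]_(#|S|, m) := \matrix_(k, j) a (enum_val k) 0 j.
have : kermx A != 0.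
  by rewrite kermx_eq0 /row_free neq_ltn (leq_ltn_trans (rank_leq_col A)).
case/matrix0Pn => k [j u_j]; pose u := row k (kermx A).
have uA : u *m A = 0 by apply/sub_kermxP; exact: row_sub.
exists (fun x => if x \in S then u 0 (enum_rank_in i0S x) else 0).
  by exists (enum_val j); rewrite enum_valP enum_valK_in mxE.
split => [x|]; first by rewrite inE => /negbTE ->.
rewrite mulmx_sum_row in uA; rewrite -[RHS]uA.
under eq_bigr => x _ do rewrite (fun_if (fun c => c *: a x)) scale0r.
rewrite -big_mkcond /= (big_enum_val (fun x => u 0 (enum_rank_in i0S x) *: a x)) /=.
apply: eq_bigr => l _; rewrite enum_valK_in; congr (_ *: _).
by apply/rowP => l'; rewrite !mxE.
Qed.

Definition supp (I : finType) (l : I -> R) := [set i | l i != 0].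

(* Slide along a linear dependence until a coefficient vanishes. *)
Lemma conic_comb_shrink (I : finType) m (a : I -> 'rV[R]_m) (lam : I -> R) :
  (forall i, 0 <= lam i) -> (m < #|supp lam|)%N ->
  exists mu : I -> R, [/\ forall i, 0 <= mu i, supp mu \proper supp lam
     & \sum_i mu i *: a i = \sum_i lam i *: a i].
Proof.
move=> lam_ge0 /(exists_lin_dep a)[c' [i1 ci1] [c'_supp c'_dep]].
have [c [[i2 ci2] c_supp c_dep]] : exists c : I -> R, [/\ exists i, 0 < c i,
    {in ~: supp lam, forall i, c i = 0} & \sum_i c i *: a i = 0].
  have [c'_gt0 | c'_le0] := ltP 0 (c' i1); first by exists c'; split => //; exists i1.
  exists (fun i => - c' i); split.
  - by exists i1; rewrite oppr_gt0 lt_neqAle ci1.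
  - by move=> i /c'_supp ->; rewrite oppr0.
  - by under eq_bigr do rewrite scaleNr; rewrite sumrN c'_dep oppr0.
have [i0 ci0_gt0 i0_min] := arg_minP (fun i => lam i / c i) (ci2 : (fun i => 0 < c i) i2).
pose t := lam i0 / c i0; pose mu i := lam i - t * c i.
have mu_i0 : mu i0 = 0 by rewrite /mu /t divfK ?gt_eqF // subrr.
have lam_i0 : lam i0 != 0.
  by apply: contraTneq ci0_gt0 => lam0; rewrite c_supp ?ltxx // !inE lam0 eqxx.
exists mu; split.
- move=> i; rewrite subr_ge0; have [ci_gt0 | ci_le0] := ltP 0 (c i).
    by rewrite -ler_pdivlMr // i0_min.
  by rewrite (le_trans _ (lam_ge0 i)) // mulr_ge0_le0 // divr_ge0 // ltW.
- apply/properP; split; last by exists i0; rewrite !inE ?mu_i0 ?eqxx.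
  apply/subsetP => i; rewrite !inE; apply: contraNneq => lam0.
  by rewrite /mu lam0 c_supp ?mulr0 ?subr0 // !inE lam0 eqxx.
- under eq_bigr do rewrite scalerBl -scalerA.
  by rewrite sumrB -scaler_sumr c_dep scaler0 subr0.
Qed.

Lemma conic_caratheodory (I : finType) m (a : I -> 'rV[R]_m) (lam : I -> R) :
  (forall i, 0 <= lam i) ->
  exists mu : I -> R, [/\ forall i, 0 <= mu i, supp mu \subset supp lam,
     (#|supp mu| <= m)%N & \sum_i mu i *: a i = \sum_i lam i *: a i].
Proof.
elim: {lam}_.+1 {-2}lam (ltnSn #|supp lam|) => // N IH lam lam_N lam_ge0.
have [m_lt | supp_le] := ltnP m #|supp lam|; last by exists lam.
have [mu [mu_ge0 mu_lam mu_sum]] := conic_comb_shrink a lam_ge0 m_lt.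
have [|nu [nu_ge0 nu_mu nu_card nu_sum]] := IH mu _ mu_ge0.
  exact: leq_trans (proper_card mu_lam) lam_N.
exists nu; split => //; last by rewrite nu_sum.
exact: subset_trans nu_mu (proper_sub mu_lam).
Qed.

End ConicCaratheodory.

Section ColorfulCaratheodory.
Variables (R : realType) (D r : nat) (v : 'I_D.+1 -> 'I_r -> 'rV[R]_D).

Lemma exists_min_sqnorm_colorful (j0 : 'I_r) :
  exists (c : {ffun 'I_D.+1 -> 'I_r}) (l : 'I_D.+1 -> R), convex_weights l /\
    forall (c' : {ffun 'I_D.+1 -> 'I_r}) m, convex_weights m ->
      sqnorm (\sum_i l i *: v i (c i)) <= sqnorm (\sum_i m i *: v i (c' i)).
Proof.
pose comb (c : {ffun 'I_D.+1 -> 'I_r}) l := \sum_i l i *: v i (c i).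
pose is_min c l := convex_weights l /\
  forall m, convex_weights m -> sqnorm (comb c l) <= sqnorm (comb c m).
have [lc lc_min] : exists lc, forall c, is_min c (lc c).
  apply: functional_choice => c.
  by have [l] := MinimalNormPoint.exists_min_sqnorm (fun i => v i (c i)); exists l.
pose c := [arg min_(c < [ffun=> j0]) sqnorm (comb c (lc c))]%O.
exists c, (lc c); rewrite /c; case: arg_minP => // c0 _ c0_min.
have [c0_cvx _] := lc_min c0; split => // c' m m_cvx.
by rewrite (le_trans (c0_min c' isT)) // (proj2 (lc_min c')).
Qed.

(* Barany's argument: take a colourful simplex whose convex hull is closest to
   the origin; if that distance were positive, a colour unused by a
   Caratheodory representation of the nearest point could be swapped for a
   point of its class beyond the supporting hyperplane, getting closer. *)
Lemma colorful_caratheodory :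
  (forall i, exists2 b, convex_weights b & \sum_j b j *: v i j = 0) ->
  exists (c : 'I_D.+1 -> 'I_r) (l : 'I_D.+1 -> R),
    convex_weights l /\ \sum_i l i *: v i (c i) = 0.
Proof.
move=> v_hull; have [b0 /convex_weights_card_gt0/card_gt0P[j0 _] _] := v_hull ord0.
have [c [l [l_cvx l_min]]] := exists_min_sqnorm_colorful j0.
set z := \sum_i l i *: v i (c i).
have [z0 | z_neq0] := eqVneq z 0; first by exists c, l.
have z_gt0 : 0 < sqnorm z by rewrite lt_def sqnorm_eq0 z_neq0 sqnorm_ge0.
have [mu [mu_ge0 mu_l mu_card mu_sum]] :=
  conic_caratheodory (fun i => v i (c i)) (proj1 l_cvx).
have mu_sum1 : \sum_i mu i = 1.
  apply: (mulIf (lt0r_neq0 z_gt0)); rewrite mul1r mulr_suml.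
  rewrite {2}/sqnorm -[X in dotr X _]mu_sum dotr_suml; apply: eq_bigr => i _.
  have [-> | mu_i] := eqVneq (mu i) 0; first by rewrite !mul0r.
  rewrite (min_sqnorm_eq_dotr l_cvx (l_min c)) //.
  by move/subsetP: mu_l => /(_ i); rewrite !inE; apply.
have [i0 mu_i0] : exists i0, mu i0 = 0.
  have /properP[_ [i0 _]] : supp mu \proper setT.
    by rewrite properT; apply: contraTneq mu_card => ->; rewrite cardsT card_ord ltnn.
  by rewrite inE negbK => /eqP; exists i0.
have [b b_cvx bv0] := v_hull i0.
have [j1 j1_le0] := exists_dotr_le0 z b_cvx bv0.
pose c' := [ffun i => if i == i0 then j1 else c i].
have z_c' : \sum_i mu i *: v i (c' i) = z.
  rewrite /z -mu_sum; apply: eq_bigr => i _; rewrite ffunE.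
  by case: eqVneq => [->|//]; rewrite mu_i0 !scale0r.
have : dotr (v i0 (c' i0) - z) z < 0.
  by rewrite dotrBl ffunE eqxx subr_lt0 (le_lt_trans j1_le0).
rewrite -{1 2}z_c' => /(convex_comb_sqnorm_lt (conj mu_ge0 mu_sum1))[m m_cvx].
by rewrite z_c' ltNge l_min.
Qed.

End ColorfulCaratheodory.

Lemma sum_row_mx (R : nmodType) (I : finType) (P : pred I) m n1 n2
    (A : I -> 'M[R]_(m, n1)) (B : I -> 'M[R]_(m, n2)) :
  \sum_(i | P i) row_mx (A i) (B i) = row_mx (\sum_(i | P i) A i) (\sum_(i | P i) B i).
Proof. by elim/big_rec3: _ => [|i x y z _ ->]; rewrite ?row_mx0 ?add_row_mx. Qed.

Lemma sum_ord_indicator (R : pzSemiRingType) n m :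
  (m < n)%N -> \sum_(j < n) (j == m :> nat)%:R = 1 :> R.
Proof.
move=> m_lt; rewrite (bigD1 (Ordinal m_lt)) //= eqxx big1 ?addr0 // => j.
by rewrite -val_eqE /= => /negbTE ->.
Qed.

Lemma sum_pushforward (R : pzRingType) (I T : finType) (V : lmodType R)
    (e : I -> T) (al : I -> R) (F : T -> V) :
  \sum_t (\sum_i (e i == t)%:R * al i) *: F t = \sum_i al i *: F (e i).
Proof.
under eq_bigr do rewrite scaler_suml.
rewrite exchange_big; apply: eq_bigr => i _ /=.
rewrite (bigD1 (e i)) //= eqxx mul1r big1 ?addr0 // => t.
by rewrite eq_sym => /negbTE ->; rewrite mul0r scale0r.
Qed.

Definition lblock (T : finType) n (L : T -> 'I_n) (j : 'I_n) : {set T} := [set t | L t == j].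

Section Sarkaria.
Variables (R : realType) (d k : nat) (T : finType) (p : T -> 'rV[R]_d).

Definition tverberg_labelling (L : T -> 'I_k.+1) :=
  (forall j, exists t, L t = j) /\ exists x, forall j, in_conv p (lblock L j) x.

Definition tverberg_core (L : T -> 'I_k.+1) (C : {set T}) :=
  forall L', {in C, L' =1 L} -> tverberg_labelling L'.

Definition lift (t : T) : 'rV[R]_(d + 1) := row_mx (p t) 1.

(* The tensor product of lift t with the j-th of the vectors
   e_0, ..., e_(k-1), -(e_0 + ... + e_(k-1)) of R^k, which sum to 0 and any k
   of which are linearly independent. *)
Definition sark (t : T) (j : 'I_k.+1) : 'M[R]_(k, d + 1) :=
  \matrix_(a, b) (lift t 0 b * ((j == a :> nat)%:R - (j == k :> nat)%:R)).

Definition block_sum (L : T -> 'I_k.+1) (mu : T -> R) (j : 'I_k.+1) :=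
  \sum_(t | L t == j) mu t *: lift t.

Lemma block_sumE L mu j : block_sum L mu j =
  row_mx (\sum_(t | L t == j) mu t *: p t) ((\sum_(t | L t == j) mu t) *: 1).
Proof.
rewrite /block_sum; under eq_bigr do rewrite scale_row_mx.
by rewrite sum_row_mx scaler_suml.
Qed.

Lemma sum_sark L mu a b : (\sum_t mu t *: sark t (L t)) a b =
  block_sum L mu (widen_ord (leqnSn k) a) 0 b - block_sum L mu ord_max 0 b.
Proof.
rewrite summxE /block_sum !summxE [in RHS]big_mkcond [X in _ - X]big_mkcond /= -sumrB.
apply: eq_bigr => t _; rewrite !mxE.
rewrite -[L t == widen_ord _ a]val_eqE -[L t == ord_max]val_eqE /= [_ == a :> nat]eq_sym.
by case: (a == L t :> nat); case: (L t == k :> nat); rewrite /=; ring.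
Qed.

Lemma sum_sark_eq0 L mu : \sum_t mu t *: sark t (L t) = 0 <->
  forall j, block_sum L mu j = block_sum L mu ord_max.
Proof.
split => [sum0 j | blocks_eq]; last first.
  by apply/matrixP => a b; rewrite sum_sark !blocks_eq subrr mxE.
have [j_lt | j_ge] := ltnP j k; last first.
  by congr block_sum; apply: val_inj; apply/eqP; rewrite eqn_leq j_ge -ltnS ltn_ord.
have -> : j = widen_ord (leqnSn k) (Ordinal j_lt) by apply: val_inj.
by apply/rowP => b; apply/eqP; rewrite -subr_eq0 -sum_sark sum0 mxE.
Qed.

Lemma sum_sark_labels t : \sum_j sark t j = 0.
Proof.
apply/matrixP => a b; rewrite summxE mxE.
under eq_bigr do rewrite mxE.
by rewrite -mulr_sumr sumrB !sum_ord_indicator ?subrr ?mulr0 // leqW.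
Qed.

Lemma tverberg_labelling_of_balanced L mu :
  (forall t, 0 <= mu t) -> 0 < \sum_t mu t ->
  \sum_t mu t *: sark t (L t) = 0 -> tverberg_labelling L.
Proof.
move=> mu_ge0 mu_pos /sum_sark_eq0 blocks_eq.
pose s := \sum_(t | L t == ord_max) mu t; pose X := \sum_(t | L t == ord_max) mu t *: p t.
have block_eq j : \sum_(t | L t == j) mu t = s /\ \sum_(t | L t == j) mu t *: p t = X.
  have := blocks_eq j; rewrite !block_sumE => /eq_row_mx[XE].
  by move=> /(congr1 (fun M : 'rV[R]_1 => M 0 0)); rewrite !mxE eqxx !mulr1 => ->.
have s_gt0 : 0 < s.
  move: mu_pos; rewrite (partition_big L xpredT) //=.
  by under eq_bigr do rewrite (proj1 (block_eq _)); rewrite sumr_const card_ord pmulrn_lgt0.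
split => [j|].
  case: (pickP (fun t => L t == j)) => [t /eqP|none]; first by exists t.
  by move: s_gt0; rewrite -(proj1 (block_eq j)) big_pred0 ?ltxx.
exists (s^-1 *: X) => j; exists (fun t => mu t / s); split => [t|].
  by rewrite divr_ge0 ?mu_ge0 ?ltW.
have lblockE : lblock L j =i (fun t => L t == j) by move=> t; rewrite inE.
rewrite !(eq_bigl _ _ lblockE) -mulr_suml (proj1 (block_eq j)) divff ?gt_eqF //.
split => //; rewrite -(proj2 (block_eq j)) scaler_sumr.
by apply: eq_bigr => t _; rewrite scalerA mulrC.
Qed.

Lemma supp_tverberg_core L mu :
  (forall t, 0 <= mu t) -> 0 < \sum_t mu t ->
  \sum_t mu t *: sark t (L t) = 0 -> tverberg_core L (supp mu).
Proof.
move=> mu_ge0 mu_pos sum0 L' L'_L; apply: tverberg_labelling_of_balanced mu_ge0 mu_pos _.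
rewrite -[RHS]sum0; apply: eq_bigr => t _.
have [-> | mu_t] := eqVneq (mu t) 0; first by rewrite !scale0r.
by rewrite L'_L // inE.
Qed.

Lemma exists_tverberg_core (X : {set T}) : (k * (d + 1) < #|X|)%N ->
  exists (L : T -> 'I_k.+1) (C : {set T}), C \subset X /\ tverberg_core L C.
Proof.
move=> X_big; pose e i : T := enum_val (widen_ord X_big i).
have e_inj : injective e by move=> i i' /enum_val_inj /(congr1 val) /= /val_inj.
have uniform_hull i : exists2 b, convex_weights b & \sum_j b j *: mxvec (sark (e i) j) = 0.
  exists (fun=> k.+1%:R^-1); first split => [j|]; rewrite ?invr_ge0 ?ler0n //.
    by rewrite sumr_const card_ord -[LHS]mulr_natr mulVf ?pnatr_eq0.
  by rewrite -scaler_sumr -linear_sum sum_sark_labels linear0 scaler0.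
have [c [al [[al_ge0 al_sum1] al_sark]]] := colorful_caratheodory uniform_hull.
pose L t := if [pick i | e i == t] is Some i then c i else ord0.
have L_e i : L (e i) = c i.
  by rewrite /L; case: pickP => [i' /eqP/e_inj -> // | /(_ i)]; rewrite eqxx.
pose mu t := \sum_i (e i == t)%:R * al i.
have mu_ge0 t : 0 <= mu t by apply: sumr_ge0 => i _; rewrite mulr_ge0 ?ler0n.
have mu_sum1 : \sum_t mu t = 1.
  have := sum_pushforward (V := R^o) e al (fun=> 1).
  by rewrite !(eq_bigr _ (fun i _ => mulr1 _)) al_sum1.
exists L, (supp mu); split.
  apply/subsetP => t; rewrite inE; apply: contraNT => tX.
  rewrite /mu big1 // => i _; case: eqP => [eit | _]; last by rewrite mul0r.
  by move: tX; rewrite -eit enum_valP.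
apply: supp_tverberg_core mu_ge0 _ _; first by rewrite mu_sum1 ltr01.
rewrite sum_pushforward; apply/eqP; rewrite -mxvec_eq0 linear_sum -[X in _ == X]al_sark.
by apply/eqP; apply: eq_bigr => i _; rewrite L_e linearZ.
Qed.

Lemma tverberg_labelling_balanced L : tverberg_labelling L ->
  exists mu : T -> R, [/\ forall t, 0 <= mu t, \sum_(t | L t == ord_max) mu t = 1
    & \sum_t mu t *: sark t (L t) = 0].
Proof.
move=> [_ [x /functional_choice[W W_hull]]]; pose mu t := W (L t) t.
have mu_block j : \sum_(t | L t == j) mu t = 1 /\ \sum_(t | L t == j) mu t *: p t = x.
  have [_ [W_sum1 W_x]] := W_hull j; rewrite -W_sum1 W_x.
  by split; apply: eq_big => t; rewrite ?inE // /mu => /eqP ->.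
exists mu; split; first by move=> t; have [W_ge0 _] := W_hull (L t); apply: W_ge0.
  by case: (mu_block ord_max).
by apply/sum_sark_eq0 => j; rewrite !block_sumE !(proj1 (mu_block _)) !(proj2 (mu_block _)).
Qed.

(* Caratheodory in dimension k (d + 1) + 1: the extra coordinate keeps track
   of the total weight of the last block, so that it cannot vanish. *)
Lemma small_tverberg_core L : tverberg_labelling L ->
  exists C : {set T}, (#|C| <= (k * (d + 1)).+1)%N /\ tverberg_core L C.
Proof.
move=> /tverberg_labelling_balanced[mu [mu_ge0 mu_max sum0]].
pose a t : 'rV[R]_(k * (d + 1) + 1) :=
  row_mx (mxvec (sark t (L t))) ((L t == ord_max)%:R *: 1).
have aE nu : \sum_t nu t *: a t = row_mx (mxvec (\sum_t nu t *: sark t (L t)))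
    ((\sum_(t | L t == ord_max) nu t) *: 1).
  under eq_bigr do rewrite scale_row_mx scalerA.
  rewrite sum_row_mx linear_sum -scaler_suml; congr (row_mx _ (_ *: _)).
    by under [RHS]eq_bigr do rewrite linearZ.
  by rewrite [RHS]big_mkcond; apply: eq_bigr => t _; case: ifP; rewrite ?mulr1 ?mulr0.
have [nu [nu_ge0 _ nu_card]] := conic_caratheodory a mu_ge0.
rewrite !aE sum0 mu_max linear0 => /eq_row_mx[/eqP nu_sark0].
move=> /(congr1 (fun M : 'rV[R]_1 => M 0 0)); rewrite !mxE eqxx !mulr1 => nu_max.
exists (supp nu); split; first by rewrite -addn1.
have nu_pos : 0 < \sum_t nu t.
  by rewrite (bigID (fun t => L t == ord_max)) /= nu_max ltr_pwDl ?ltr01 ?sumr_ge0.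
by apply: supp_tverberg_core nu_ge0 nu_pos _; apply/eqP; rewrite -mxvec_eq0.
Qed.

End Sarkaria.

Section Walks.
Variables (X : Type) (V : X -> Prop) (adj : X -> X -> Prop).

Definition walk_connected x y := exists n (f : nat -> X),
  f 0%N = x /\ f n = y /\ (forall i, (i <= n)%N -> V (f i)) /\
  (forall i, (i < n)%N -> adj (f i) (f i.+1)).

Lemma walk_refl x : V x -> walk_connected x x.
Proof. by move=> Vx; exists 0%N, (fun=> x); split; [|split; [|split]] => // i. Qed.

Lemma walk_edge x y : V x -> V y -> adj x y -> walk_connected x y.
Proof.
move=> Vx Vy xy; exists 1%N, (fun i => if i is 0%N then x else y).
by split; [|split; [|split]] => // -[|[]].
Qed.

Lemma walk_trans x y z :
  walk_connected x y -> walk_connected y z -> walk_connected x z.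
Proof.
move=> [n [f [f0 [fn [fV fadj]]]]] [m [g [g0 [gm [gV gadj]]]]].
exists (n + m)%N, (fun i => if (i <= n)%N then f i else g (i - n)%N).
split; [|split; [|split]].
- by rewrite leq0n.
- case: ifP => [|_]; last by rewrite addKn.
  by rewrite -{2}[n]addn0 leq_add2l leqn0 => /eqP m0; rewrite -gm m0 addn0 fn g0.
- move=> i i_le; case: ifP => [/fV //|]; rewrite leqNgt => /negbFE n_lt.
  by apply: gV; rewrite leq_subLR.
move=> i; case: (ltngtP i n) => [i_lt_n _ | n_lt_i i_lt | -> i_lt].
- exact: fadj.
- by rewrite subSn ?(ltnW n_lt_i) //; apply: gadj; lia.
- by rewrite subSn // subnn fn -g0; apply: gadj; lia.
Qed.

Lemma walk_sym x y : (forall x y, adj x y -> adj y x) ->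
  walk_connected x y -> walk_connected y x.
Proof.
move=> adj_sym [n [f [f0 [fn [fV fadj]]]]].
exists n, (fun i => f (n - i)%N); rewrite subn0 subnn; split; [done | split; [done | split]].
  by move=> i _; apply: fV; rewrite leq_subr.
move=> i i_lt; have -> : (n - i = (n - i.+1).+1)%N by lia.
by apply/adj_sym/fadj; lia.
Qed.

End Walks.

Section LabellingPartitions.
Variable T : finType.

Definition part n (L : T -> 'I_n) : {set {set T}} := [set lblock L j | j : 'I_n].

Lemma part_ext n (L L' : T -> 'I_n) : L =1 L' -> part L = part L'.
Proof. by move=> LL'; apply: eq_imset => j; apply/setP => t; rewrite !inE LL'. Qed.

Section Surjective.
Variables (n : nat) (L : T -> 'I_n).
Hypothesis L_surj : forall j, exists t, L t = j.

Lemma set0_notin_part : set0 \notin part L.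
Proof.
apply/imsetP => -[j _]; have [t <-] := L_surj j.
by move/setP/(_ t); rewrite !inE eqxx.
Qed.

Lemma card_part : #|part L| = n.
Proof.
rewrite card_imset ?card_ord // => j j'; have [t <-] := L_surj j.
by move/setP/(_ t); rewrite !inE eqxx => /esym/eqP.
Qed.

Lemma partition_part : partition (part L) [set: T].
Proof.
apply/and3P; split; last exact: set0_notin_part.
- apply/eqP/setP => t; rewrite inE; apply/bigcupP.
  by exists (lblock L (L t)); rewrite ?imset_f // inE.
- apply/trivIsetP => _ _ /imsetP[j _ ->] /imsetP[j' _ ->] jj'.
  rewrite -setI_eq0; apply/eqP/setP => t; rewrite !inE.
  by apply: contraNF jj' => /andP[/eqP <- /eqP <-].
Qed.

End Surjective.

Lemma restrict_setT (P : {set {set T}}) : set0 \notin P -> restrict P [set: T] = P.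
Proof.
move=> P0; apply/setP => B; rewrite /restrict (eq_imset (g := id)) ?imset_id => [|A].
  by rewrite !inE; case: eqVneq => // ->; rewrite (negbTE P0).
by rewrite setIT.
Qed.

Lemma pdist_sym (P Q : {set {set T}}) : pdist P Q = pdist Q P.
Proof. by apply: eq_bigl => Y; rewrite eq_sym. Qed.

Lemma pdist_eq1 (P Q : {set {set T}}) (t : T) :
  set0 \notin P -> set0 \notin Q -> P != Q ->
  restrict P (~: [set t]) = restrict Q (~: [set t]) -> pdist P Q = 1%N.
Proof.
move=> P0 Q0 PQ PQ_t; apply/eqP; rewrite eqn_leq; apply/andP; split.
  by rewrite -(cards1 t); apply: (bigmin_le_cond (T := nat)); rewrite PQ_t.
apply: (le_bigmin (T := nat)) => [|Y]; first by apply/card_gt0P; exists t.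
apply: contraTT; rewrite -leqNgt leqn0 cards_eq0 => /eqP ->.
by rewrite setC0 !restrict_setT.
Qed.

Lemma pdist_relabel n (L L' : T -> 'I_n) (t : T) :
  (forall j, exists s, L s = j) -> (forall j, exists s, L' s = j) ->
  L t != L' t -> {in ~: [set t], L =1 L'} -> pdist (part L) (part L') = 1%N.
Proof.
move=> L_surj L'_surj Lt_neq L_L'.
apply: (pdist_eq1 (t := t)); rewrite ?set0_notin_part //.
  apply: contraNneq (Lt_neq) => L_L'_part.
  have /imsetP[j _ /setP Lt_block] : lblock L (L t) \in part L'.
    by rewrite -L_L'_part imset_f.
  have [s L's] := L'_surj (L t).
  have s_neq_t : s != t by apply: contraNneq Lt_neq => st; rewrite -L's st.
  have Ls : L s = L t by rewrite L_L' ?L's // !inE s_neq_t.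
  have := Lt_block t; rewrite !inE eqxx => /esym/eqP L't.
  have := Lt_block s; rewrite !inE Ls eqxx => /esym/eqP L's_j.
  by rewrite -L's L's_j L't.
rewrite /restrict /part -!imset_comp; congr (_ :\ _); apply: eq_imset => j /=.
apply/setP => s; rewrite !inE; case: (eqVneq s t) => [-> | s_neq_t]; rewrite ?andbF //.
by rewrite L_L' // !inE s_neq_t.
Qed.

End LabellingPartitions.

Section TverbergGraph.
Variables (R : realType) (d k : nat) (T : finType) (p : T -> 'rV[R]_d).

Let tverberg_walk := walk_connected (is_tverberg p k.+1) (fun P Q => pdist P Q = 1%N).

Lemma tverberg_part (L : T -> 'I_k.+1) :
  tverberg_labelling p L -> is_tverberg p k.+1 (part L).
Proof.
move=> [L_surj [x x_hull]]; split; first by split; [apply: partition_part | apply: card_part].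
by exists x => _ /imsetP[j _ ->].
Qed.

Lemma tverberg_partition_labelling P : is_tverberg p k.+1 P ->
  exists L : T -> 'I_k.+1, part L = P /\ tverberg_labelling p L.
Proof.
move=> [[/and3P[/eqP P_cover P_triv P0] P_card] [x x_hull]].
have [B0 B0P] : exists B0, B0 \in P by apply/card_gt0P; rewrite P_card.
pose blk (j : 'I_k.+1) : {set T} := enum_val (cast_ord (esym P_card) j).
pose L t : 'I_k.+1 := cast_ord P_card (enum_rank_in B0P (pblock P t)).
have blkP j : blk j \in P by apply: enum_valP.
have t_cover t : t \in cover P by rewrite P_cover inE.
have L_blk j : lblock L j = blk j.
  apply/setP => t; rewrite inE; apply/eqP/idP => [<- | t_blk].
    by rewrite /blk /L cast_ordK enum_rankK_in ?pblock_mem // mem_pblock.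
  by rewrite /L (def_pblock P_triv (blkP j) t_blk) /blk enum_valK_in cast_ordKV.
exists L; split; last split.
- apply/setP => B; apply/imsetP/idP => [[j _ ->] | BP]; first by rewrite L_blk.
  exists (cast_ord P_card (enum_rank_in B0P B)) => //.
  by rewrite L_blk /blk cast_ordK enum_rankK_in.
- move=> j; have /set0Pn[t] : blk j != set0 by apply: contraNneq P0 => <-.
  by rewrite -L_blk inE => /eqP; exists t.
- by exists x => j; rewrite L_blk; apply: x_hull.
Qed.

(* Relabel the points outside C one at a time: every intermediate labelling
   still agrees with L1 on the core C, hence is Tverberg. *)
Lemma core_walk (L1 L2 : T -> 'I_k.+1) (C : {set T}) :
  tverberg_core p L1 C -> {in C, L2 =1 L1} -> tverberg_walk (part L1) (part L2).
Proof.
move: {2}#|_| (erefl #|[set t | L1 t != L2 t]|) => N.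
elim: N L1 => [|N IH] L1 diff_N L1_core L2_L1.
  have L1_L2 : L1 =1 L2.
    move=> t; apply/eqP; apply: contraT => Lt.
    by move/eqP: diff_N; rewrite cards_eq0 => /eqP/setP/(_ t); rewrite !inE Lt.
  by rewrite -(part_ext L1_L2); apply/walk_refl/tverberg_part/L1_core.
have /card_gt0P[t] : (0 < #|[set t | L1 t != L2 t]|)%N by rewrite diff_N.
rewrite inE => L1t_neq.
have tC : t \notin C by apply: contra L1t_neq => /L2_L1 ->.
pose L1' s := if s == t then L2 t else L1 s.
have L1'_L1 : {in ~: [set t], L1' =1 L1} by move=> s; rewrite !inE /L1' => /negbTE ->.
have C_t : {subset C <= ~: [set t]} by move=> s sC; rewrite !inE; apply: contraNneq tC => <-.
have L1'_core : tverberg_core p L1' C.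
  by move=> L' L'_L1'; apply: L1_core => s sC; rewrite L'_L1' // L1'_L1 ?C_t.
apply: walk_trans (IH L1' _ L1'_core _).
- have L1_tv : tverberg_labelling p L1 := L1_core L1 (fun _ _ => erefl).
  have L1'_tv : tverberg_labelling p L1' := L1'_core L1' (fun _ _ => erefl).
  apply: walk_edge; try exact: tverberg_part.
  apply: (pdist_relabel (t := t)) L1_tv.1 L1'_tv.1 _ _; first by rewrite /L1' eqxx.
  by move=> s s_t; rewrite L1'_L1.
- have -> : [set s | L1' s != L2 s] = [set s | L1 s != L2 s] :\ t.
    by apply/setP => s; rewrite !inE /L1'; case: (eqVneq s t) => [->|]; rewrite ?eqxx.
  by apply/eqP; rewrite -eqSS -diff_N (cardsD1 t [set s | L1 s != L2 s]) !inE L1t_neq.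
- by move=> s sC; rewrite L2_L1 // L1'_L1 ?C_t.
Qed.

Lemma disjoint_cores_walk (L1 L2 : T -> 'I_k.+1) (C1 C2 : {set T}) :
  tverberg_core p L1 C1 -> tverberg_core p L2 C2 -> [disjoint C1 & C2] ->
  tverberg_walk (part L1) (part L2).
Proof.
move=> L1_core L2_core C12; pose L t := if t \in C1 then L1 t else L2 t.
apply: (walk_trans (core_walk (L2 := L) L1_core _)) => [t tC1|]; first by rewrite /L tC1.
apply: walk_sym => [P Q|]; first by rewrite pdist_sym.
by apply: core_walk L2_core _ => t tC2; rewrite /L (disjointFl C12 tC2).
Qed.

End TverbergGraph.

Theorem theorem1p3 (R : realType) (r d : nat) (T : finType)
    (p : T -> 'rV[R]_d) :
  (0 < r)%N -> (0 < d)%N -> injective p ->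
  (3 * Tv d r - 1 <= #|T|)%N ->
  tverberg_graph_connected p r.
Proof.
case: r => [//|k] _ _ _ T_big P Q /tverberg_partition_labelling[LP [<- LP_tv]].
move=> /tverberg_partition_labelling[LQ [<- LQ_tv]].
have [CP [CP_small CP_core]] := small_tverberg_core LP_tv.
have [CQ [CQ_small CQ_core]] := small_tverberg_core LQ_tv.
have [CPQ | /negP CPQ_meet] := boolP [disjoint CP & CQ].
  exact: disjoint_cores_walk CP_core CQ_core CPQ.
have [|LR [CR [CR_sub CR_core]]] := exists_tverberg_core (k := k) p (X := ~: (CP :|: CQ)).
  have : (0 < #|CP :&: CQ|)%N by rewrite card_gt0 setI_eq0; apply/negP.
  move: (cardsC (CP :|: CQ)) (cardsUI CP CQ) T_big; rewrite /Tv; lia.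
have CR_disj : [disjoint CR & CP :|: CQ] by rewrite disjoints_subset.
apply: walk_trans (disjoint_cores_walk CP_core CR_core _)
                  (disjoint_cores_walk CR_core CQ_core _).
  by rewrite disjoint_sym (disjointWr (subsetUl CP CQ) CR_disj).
exact: disjointWr (subsetUr CP CQ) CR_disj.
Qed.
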